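(* Let $G(\lambda)\in\mathbb F(\lambda)^{p\times m}$, let $L(\lambda)$ be a strong block minimal bases linearization of $G(\lambda)$ as in the context, with transfer function matrix $\widehat G(\lambda)=\begin{bmatrix} M(\lambda)+\widehat K_2^TC(\lambda I_n-A)^{-1}B\widehat K_1 & K_2(\lambda)^T\\ K_1(\lambda) & 0\end{bmatrix}$. (a) If $\varepsilon_1\le\dots\le\varepsilon_l$ are the right minimal indices of $G(\lambda)$, then $\varepsilon_1+\deg N_1(\lambda)\le\dots\le\varepsilon_l+\deg N_1(\lambda)$ are the right minimal indices of $\widehat G(\lambda)$. (b) If $\eta_1\le\dots\le\eta_q$ are the left minimal indices of $G(\lambda)$, then $\eta_1+\deg N_2(\lambda)\le\dots\le\eta_q+\deg N_2(\lambda)$ are the left minimal indices of $\widehat G(\lambda)$.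
   Context: $\mathbb F$ is an arbitrary field. A polynomial matrix $K\in\mathbb F[\lambda]^{a\times b}$, $a<b$, is a minimal basis if its rows form a minimal basis (polynomial basis of least total degree) of the subspace they span; $K\in\mathbb F[\lambda]^{a_1\times b}$, $N\in\mathbb F[\lambda]^{a_2\times b}$ are dual minimal bases if both are minimal bases, $a_1+a_2=b$ and $KN^T=0$. Strong block minimal bases linearization: write $G=D+C(\lambda I_n-A)^{-1}B$ with $D$ the polynomial part, $\deg D>1$, and $C(\lambda I_n-A)^{-1}B$ a minimal order state-space realization of the strictly proper part. Let $K_1\in\mathbb F[\lambda]^{\widehat m\times(m+\widehat m)}$, $K_2\in\mathbb F[\lambda]^{\widehat p\times(p+\widehat p)}$ be minimal bases with all row degrees $1$, $N_1\in\mathbb F[\lambda]^{m\times(m+\widehat m)}$, $N_2\in\mathbb F[\lambda]^{p\times(p+\widehat p)}$ minimal bases dual to $K_1,K_2$, each with all row degrees equal, and $M(\lambda)$ a $(p+\widehat p)\times(m+\widehat m)$ pencil with $D=N_2MN_1^T$ and $\deg D=\deg N_1+\deg N_2+1$. Let constant $\widehat K_i$ and polynomial $\widehat N_i$ be such that $\begin{bmatrix}K_i\\ \widehat K_i\end{bmatrix}$ is unimodular with inverse $\begin{bmatrix}\widehat N_i^T & N_i^T\end{bmatrix}$, $i=1,2$. For nonsingular $T,S$, $L(\lambda)=\begin{bmatrix}T(\lambda I_n-A)S & TB\widehat K_1 & 0\\ -\widehat K_2^TCS & M(\lambda) & K_2(\lambda)^T\\ 0 & K_1(\lambda) & 0\end{bmatrix}$.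 Right (left) minimal indices of a rational matrix $G$: degrees of the vectors of a minimal basis of $\mathcal N_r(G)=\{x:Gx=0\}$ ($\mathcal N_\ell(G)=\{x:x^TG=0\}$). *)

From HB Require Import structures.
From mathcomp Require Import all_boot all_order all_algebra.
Set Implicit Arguments. Unset Strict Implicit. Unset Printing Implicit Defensive.
Import Order.TTheory GRing.Theory Num.Theory.
Local Open Scope ring_scope.

Section Defs.
Variable F : fieldType.

Definition ratF := {fraction {poly F}}.

Definition ratmx a b (P : 'M[{poly F}]_(a, b)) : 'M[ratF]_(a, b) :=
  map_mx (fun x => FracField.tofrac x) P.

Definition polymx a b (A : 'M[F]_(a, b)) : 'M[{poly F}]_(a, b) :=
  map_mx polyC A.

Definition rowdeg a b (P : 'M[{poly F}]_(a, b)) (i : 'I_a) : nat :=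
  (\max_(j < b) size (P i j)).-1.

Definition mxdeg a b (P : 'M[{poly F}]_(a, b)) : nat :=
  (\max_(i < a) \max_(j < b) size (P i j)).-1.

Definition totdeg a b (P : 'M[{poly F}]_(a, b)) : nat :=
  (\sum_(i < a) rowdeg P i)%N.

Definition poly_basis_of k a b (V : 'M[ratF]_(k, b)) (P : 'M[{poly F}]_(a, b)) :=
  row_free (ratmx P) && (ratmx P == V)%MS.

Definition minimal_basis_of k a b (V : 'M[ratF]_(k, b)) (P : 'M[{poly F}]_(a, b)) :=
  poly_basis_of V P /\
  forall a' (P' : 'M[{poly F}]_(a', b)), poly_basis_of V P' -> (totdeg P <= totdeg P')%N.

Definition minimal_basis a b (K : 'M[{poly F}]_(a, b)) := minimal_basis_of (ratmx K) K.

Definition dual_minimal_bases a1 a2 b (K : 'M[{poly F}]_(a1, b)) (N : 'M[{poly F}]_(a2, b)) :=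
  [/\ minimal_basis K, minimal_basis N, (a1 + a2 = b)%N & K *m N^T = 0].

Definition row_degrees_eq a b (P : 'M[{poly F}]_(a, b)) (d : nat) :=
  forall i, rowdeg P i = d.

Definition equal_row_degrees a b (P : 'M[{poly F}]_(a, b)) :=
  forall i j, rowdeg P i = rowdeg P j.

Definition ss_tf n p m (A : 'M[F]_n) (B : 'M[F]_(n, m)) (C : 'M[F]_(p, n)) : 'M[ratF]_(p, m) :=
  ratmx (polymx C) *m invmx (ratmx (char_poly_mx A)) *m ratmx (polymx B).

Definition minimal_order_realization n p m (A : 'M[F]_n) (B : 'M[F]_(n, m)) (C : 'M[F]_(p, n)) :=
  forall n' (A' : 'M[F]_n') (B' : 'M[F]_(n', m)) (C' : 'M[F]_(p, n')),
    ss_tf A' B' C' = ss_tf A B C -> (n <= n')%N.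

(* right null space N_r(G) = {x : G x = 0}, as a row space (x^T G^T = 0) *)
Definition right_null p m (G : 'M[ratF]_(p, m)) : 'M[ratF]_m := kermx G^T.
Definition left_null p m (G : 'M[ratF]_(p, m)) : 'M[ratF]_p := kermx G.

Definition min_indices_of k b (V : 'M[ratF]_(k, b)) (s : seq nat) :=
  sorted leq s /\
  exists l (P : 'M[{poly F}]_(l, b)),
    minimal_basis_of V P /\ perm_eq s [seq rowdeg P i | i <- enum 'I_l].

Definition right_min_indices p m (G : 'M[ratF]_(p, m)) (s : seq nat) :=
  min_indices_of (right_null G) s.
Definition left_min_indices p m (G : 'M[ratF]_(p, m)) (s : seq nat) :=
  min_indices_of (left_null G) s.

Definition Ghat n p m ph mh (A : 'M[F]_n) (B : 'M[F]_(n, m)) (C : 'M[F]_(p, n))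
  (M : 'M[{poly F}]_(p + ph, m + mh)) (K1 : 'M[{poly F}]_(mh, m + mh))
  (K2 : 'M[{poly F}]_(ph, p + ph)) (K1h : 'M[F]_(m, m + mh)) (K2h : 'M[F]_(p, p + ph))
  : 'M[ratF]_(p + ph + mh, m + mh + ph) :=
  block_mx (ratmx M + ss_tf A (B *m K1h) (K2h^T *m C)) (ratmx K2^T)
           (ratmx K1) 0.

Definition Lin n p m ph mh (A : 'M[F]_n) (B : 'M[F]_(n, m)) (C : 'M[F]_(p, n))
  (M : 'M[{poly F}]_(p + ph, m + mh)) (K1 : 'M[{poly F}]_(mh, m + mh))
  (K2 : 'M[{poly F}]_(ph, p + ph)) (K1h : 'M[F]_(m, m + mh)) (K2h : 'M[F]_(p, p + ph))
  (T S : 'M[F]_n) : 'M[{poly F}]_(n + (p + ph) + mh, n + (m + mh) + ph) :=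
  block_mx
    (block_mx (polymx T *m char_poly_mx A *m polymx S) (polymx (T *m B *m K1h))
              (- polymx (K2h^T *m C *m S)) M)
    (col_mx 0 K2^T)
    (row_mx 0 K1) 0.

End Defs.

(* Write G = D + S with S strictly proper.  The transfer function of the
   linearization is Ghat = [M + K2h^T S K1h, K2^T; K1, 0], and the unimodularity
   of [K_i; K_ih] yields polynomial matrices Phi = [N1^T; -N2h M N1^T] and
   Psi = [K1h, 0] with Psi Phi = 1 that map N_r(G) onto N_r(Ghat) and back.
   For x in N_r(G), deg (Phi x) = deg x + deg N1: the block N1^T x has exactly
   this degree by the predictable degree property (the highest coefficient
   matrix of a minimal basis with equal row degrees has full rank), and the
   other block y = -N2h M N1^T x is no larger, because K2^T y differs from
   M N1^T x by K2h^T S x, whose degree is below deg x.  So Phi carries minimal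
   bases to minimal bases, shifting every degree by deg N1; the left indices
   follow by transposition, which swaps (K1, N1) and (K2, N2).  Null spaces are
   row spaces here, so Phi and Psi act through their transposes. *)

From HB Require Import structures.
From mathcomp Require Import all_boot all_order all_algebra zify.
Set Implicit Arguments. Unset Strict Implicit. Unset Printing Implicit Defensive.
Import GRing.Theory.
Local Open Scope ring_scope.

Section BlockIdentities.
Variables (R : comNzRingType) (p m ph mh : nat).
Variables (K1 N1h : 'M[R]_(mh, m + mh)) (K1h N1 : 'M[R]_(m, m + mh)).
Variables (K2 N2h : 'M[R]_(ph, p + ph)) (K2h N2 : 'M[R]_(p, p + ph)).
Variables (M : 'M[R]_(p + ph, m + mh)) (S : 'M[R]_(p, m)).
Hypotheses (U1 : col_mx K1 K1h *m row_mx N1h^T N1^T = 1%:M)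
  (U1' : row_mx N1h^T N1^T *m col_mx K1 K1h = 1%:M)
  (U2 : col_mx K2 K2h *m row_mx N2h^T N2^T = 1%:M)
  (U2' : row_mx N2h^T N2^T *m col_mx K2 K2h = 1%:M).

(* With S the strictly proper part of G, block_tf is Ghat, and null_emb, null_ret
   are the matrices Phi, Psi of the header. *)
Definition block_tf := block_mx (M + K2h^T *m S *m K1h) K2^T K1 0.
Definition null_emb := col_mx N1^T (- (N2h *m M *m N1^T)).
Definition null_ret := row_mx K1h (0 : 'M[R]_(m, ph)).
Local Notation G := (N2 *m M *m N1^T + S).

Lemma mul_col_row_eq1 a b c (X : 'M[R]_(a, c)) (Y : 'M_(b, c)) Z W :
  col_mx X Y *m row_mx Z W = 1%:M ->
  [/\ X *m Z = 1%:M, X *m W = 0, Y *m Z = 0 & Y *m W = 1%:M].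
Proof. by rewrite mul_col_row scalar_mx_block => /eq_block_mx[]. Qed.

Let K1N1 : K1 *m N1^T = 0. Proof. by have [] := mul_col_row_eq1 U1. Qed.
Let K1hN1 : K1h *m N1^T = 1%:M. Proof. by have [] := mul_col_row_eq1 U1. Qed.
Let N1K1 : N1h^T *m K1 + N1^T *m K1h = 1%:M. Proof. by rewrite -mul_row_col U1'. Qed.
Let N2K2 : N2 *m K2^T = 0.
Proof. by have [_ e _ _] := mul_col_row_eq1 U2; rewrite -[N2]trmxK -trmx_mul e trmx0. Qed.
Let N2K2h : N2 *m K2h^T = 1%:M.
Proof. by have [_ _ _ e] := mul_col_row_eq1 U2; rewrite -[N2]trmxK -trmx_mul e trmx1. Qed.
Let N2hK2 : N2h *m K2^T = 1%:M.
Proof. by have [e _ _ _] := mul_col_row_eq1 U2; rewrite -[N2h]trmxK -trmx_mul e trmx1. Qed.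
Let N2hK2h : N2h *m K2h^T = 0.
Proof. by have [_ _ e _] := mul_col_row_eq1 U2; rewrite -[N2h]trmxK -trmx_mul e trmx0. Qed.
Let K2N2 : K2^T *m N2h + K2h^T *m N2 = 1%:M.
Proof. by rewrite -[N2h]trmxK -[N2]trmxK -!trmx_mul -linearD /= -mul_row_col U2' trmx1. Qed.

Lemma null_ret_emb : null_ret *m null_emb = 1%:M.
Proof. by rewrite mul_row_col mul0mx addr0 K1hN1. Qed.

Lemma block_tf_null_emb : block_tf *m null_emb = col_mx (K2h^T *m G) 0.
Proof.
rewrite mul_block_col mul0mx addr0 K1N1 mulmxN mulmxDl !mulmxA.
have -> : K2^T *m N2h = 1%:M - K2h^T *m N2 by rewrite -K2N2 addrK.
rewrite -(mulmxA _ K1h) K1hN1 mulmx1 mulmxBl mul1mx mulmxDr !mulmxA.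
by congr col_mx; rewrite mulmxBl opprB addrC addrA subrK.
Qed.

Lemma G_null_ret : G *m null_ret = row_mx N2 (- (N2 *m M *m N1h^T)) *m block_tf.
Proof.
have N1hK1 : N1h^T *m K1 = 1%:M - N1^T *m K1h by rewrite -N1K1 addrK.
rewrite mul_mx_row mulmx0 mul_row_block mulmx0 addr0 N2K2 mulNmx -(mulmxA _ N1h^T) N1hK1.
rewrite mulmxBr mulmx1 mulmxDr !mulmxA N2K2h mul1mx.
by congr row_mx; rewrite mulmxDl opprB [RHS]addrC addrA subrK.
Qed.

Lemma null_emb_ret :
  1%:M - null_emb *m null_ret = block_mx 0 N1h^T N2h (- (N2h *m M *m N1h^T)) *m block_tf.
Proof.
have N1hK1 : N1h^T *m K1 = 1%:M - N1^T *m K1h by rewrite -N1K1 addrK.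
rewrite mul_col_row !mulmx0 scalar_mx_block opp_block_mx add_block_mx mulmx_block.
rewrite !mul0mx !mulmx0 !add0r !oppr0 !addr0 N2hK2 -N1hK1 !mulNmx opprK -(mulmxA _ N1h^T) N1hK1.
rewrite mulmxBr mulmx1 mulmxDr !mulmxA N2hK2h !mul0mx addr0.
by congr block_mx; rewrite opprB [RHS]addrC subrK.
Qed.

Lemma null_emb_tr : null_emb^T = row_mx N1 (- (N1 *m M^T *m N2h^T)).
Proof. by rewrite tr_col_mx trmxK linearN /= !trmx_mul trmxK mulmxA. Qed.

End BlockIdentities.

Section FieldMatrices.
Variable K : fieldType.

Lemma kermx_tr_mul_sub a b c e (G : 'M[K]_(a, b)) (H : 'M_(c, e)) X E :
  H *m X = E *m G -> (kermx G^T *m X^T <= kermx H^T)%MS.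
Proof.
by move=> eHX; apply/sub_kermxP; rewrite -mulmxA -trmx_mul eHX trmx_mul mulmxA mulmx_ker mul0mx.
Qed.

Lemma kermx_tr_mul_id c e b (H : 'M[K]_(c, e)) (X : 'M_(e, b)) Y E :
  1%:M - X *m Y = E *m H -> kermx H^T *m Y^T *m X^T = kermx H^T.
Proof.
move=> eXY; have : kermx H^T *m (1%:M - X *m Y)^T = 0.
  by rewrite eXY trmx_mul mulmxA mulmx_ker mul0mx.
by rewrite linearB /= trmx1 trmx_mul mulmxBr mulmx1 mulmxA => /eqP; rewrite subr_eq0 => /eqP.
Qed.

Lemma row_replace_unitmx a (c : 'rV[K]_a) i0 :
  c ord0 i0 != 0 -> \matrix_(i, j) (if i == i0 then c ord0 j else (i == j)%:R) \in unitmx.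
Proof.
set E := \matrix_(i, j) _ => ci0; rewrite -row_free_unit; apply/inj_row_free=> v /rowP vE.
have vEj j : (v *m E) ord0 j = v ord0 i0 * c ord0 j + (j != i0)%:R * v ord0 j.
  rewrite mxE (bigD1 i0) //= mxE eqxx; congr (_ + _); case: eqVneq => [->|j_neq].
    by rewrite mul0r big1 // => i /negPf i_neq; rewrite mxE i_neq mulr0.
  rewrite mul1r (bigD1 j) //= mxE (negPf j_neq) eqxx mulr1 big1 ?addr0 // => i.
  by case/andP=> /negPf i_i0 /negPf i_j; rewrite mxE i_i0 i_j mulr0.
have vi0 : v ord0 i0 = 0.
  move: (vE i0); rewrite vEj eqxx mul0r addr0 mxE => /eqP.
  by rewrite mulf_eq0 (negPf ci0) orbF => /eqP.
apply/rowP=> j; have := vE j; rewrite vEj vi0 mul0r add0r !mxE.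
by case: eqVneq => [->|_]; rewrite ?vi0 ?mul1r.
Qed.

End FieldMatrices.

Section RatMx.
Variable F : fieldType.

Lemma ratmxM a b c (P : 'M[{poly F}]_(a, b)) (Q : 'M_(b, c)) :
  ratmx (P *m Q) = ratmx P *m ratmx Q.
Proof. exact: map_mxM. Qed.

Lemma ratmxN a b (P : 'M[{poly F}]_(a, b)) : ratmx (- P) = - ratmx P.
Proof. exact: map_mxN. Qed.

Lemma ratmx1 a : ratmx (1%:M : 'M[{poly F}]_a) = 1%:M.
Proof. exact: map_mx1. Qed.

Lemma ratmx0 a b : ratmx (0 : 'M[{poly F}]_(a, b)) = 0.
Proof. exact: map_mx0. Qed.

Lemma ratmx_col a b c (P : 'M[{poly F}]_(a, c)) (Q : 'M_(b, c)) :
  ratmx (col_mx P Q) = col_mx (ratmx P) (ratmx Q).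
Proof. exact: map_col_mx. Qed.

Lemma ratmx_row_mx a b c (P : 'M[{poly F}]_(a, b)) (Q : 'M_(a, c)) :
  ratmx (row_mx P Q) = row_mx (ratmx P) (ratmx Q).
Proof. exact: map_row_mx. Qed.

Lemma ratmx_tr a b (P : 'M[{poly F}]_(a, b)) : ratmx P^T = (ratmx P)^T.
Proof. by apply/matrixP=> i j; rewrite !mxE. Qed.

Lemma ratmx_inj a b : injective (@ratmx F a b).
Proof.
move=> P Q /matrixP ePQ; apply/matrixP=> i j; have := ePQ i j.
by rewrite !mxE => /eqP; rewrite tofrac_eq => /eqP.
Qed.

Lemma ratmx_row a b (P : 'M[{poly F}]_(a, b)) i : ratmx (row i P) = row i (ratmx P).
Proof. exact: map_row. Qed.

Lemma row_free_ratmx_row_neq0 a b (P : 'M[{poly F}]_(a, b)) i :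
  row_free (ratmx P) -> row i P != 0.
Proof.
move=> frP; apply/eqP=> /(congr1 (@ratmx F 1 b)); rewrite ratmx_row ratmx0 rowE.
move/eqP; rewrite mulmx_free_eq0 // => /eqP/matrixP/(_ 0 i); rewrite !mxE !eqxx.
by move/eqP; rewrite oner_eq0.
Qed.

Lemma ratmx_scale a b (q : {poly F}) (P : 'M[{poly F}]_(a, b)) :
  ratmx (q *: P) = tofrac q *: ratmx P.
Proof. by apply/matrixP=> i j; rewrite !mxE rmorphM. Qed.

Lemma polymxM a b c (P : 'M[F]_(a, b)) (Q : 'M_(b, c)) : polymx (P *m Q) = polymx P *m polymx Q.
Proof. exact: map_mxM. Qed.

Lemma polymx_tr a b (A : 'M[F]_(a, b)) : polymx A^T = (polymx A)^T.
Proof. by apply/matrixP=> i j; rewrite !mxE. Qed.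

Lemma char_poly_mx_tr n (A : 'M[F]_n) : char_poly_mx A^T = (char_poly_mx A)^T.
Proof. by rewrite /char_poly_mx linearB /= tr_scalar_mx map_trmx. Qed.

Lemma ss_tf_tr n p m (A : 'M[F]_n) (B : 'M[F]_(n, m)) (C : 'M[F]_(p, n)) :
  (ss_tf A B C)^T = ss_tf A^T C^T B^T.
Proof.
by rewrite /ss_tf !trmx_mul trmx_inv -!ratmx_tr -char_poly_mx_tr !polymx_tr mulmxA.
Qed.

Lemma ss_tf_mul n p m p' m' (A : 'M[F]_n) (B : 'M[F]_(n, m)) (C : 'M[F]_(p, n))
    (L : 'M[F]_(p', p)) (R : 'M[F]_(m, m')) :
  ss_tf A (B *m R) (L *m C) = ratmx (polymx L) *m ss_tf A B C *m ratmx (polymx R).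
Proof. by rewrite /ss_tf /polymx /ratmx !map_mxM !mulmxA. Qed.

End RatMx.

Section RowDegree.
Variable F : fieldType.

Lemma rowdeg_leP a b (P : 'M[{poly F}]_(a, b)) i k :
  reflect (forall j, size (P i j) <= k.+1)%N (rowdeg P i <= k)%N.
Proof.
rewrite /rowdeg (_ : forall x : nat, (x.-1 <= k)%N = (x <= k.+1)%N); last by case.
by apply: (iffP (bigmax_leqP _ _ _)) => [Pk j|Pk j _]; apply: Pk.
Qed.

Lemma size_le_rowdeg a b (P : 'M[{poly F}]_(a, b)) i j : (size (P i j) <= (rowdeg P i).+1)%N.
Proof. by move: j; apply/rowdeg_leP. Qed.

Lemma size_le_mxdeg a b (P : 'M[{poly F}]_(a, b)) i j : (size (P i j) <= (mxdeg P).+1)%N.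
Proof.
rewrite /mxdeg; apply: leq_trans _ (leqSpred _).
apply: leq_trans (leq_bigmax (F := fun j => size (P i j)) j) _.
exact: (leq_bigmax (F := fun i => \max_(j < b) size (P i j)) i).
Qed.

Lemma rowdeg_row a b (P : 'M[{poly F}]_(a, b)) i : rowdeg (row i P) ord0 = rowdeg P i.
Proof. by rewrite /rowdeg; under eq_bigr do rewrite mxE. Qed.

Lemma rowdeg_mxdeg a b (P : 'M[{poly F}]_(a, b)) i :
  equal_row_degrees P -> rowdeg P i = mxdeg P.
Proof.
move=> eqdeg; have a_gt0 : (0 < #|'I_a|)%N by apply/card_gt0P; exists i.
rewrite /mxdeg; have [i0 ->] := eq_bigmax (fun i => \max_(j < b) size (P i j)) a_gt0.
exact: eqdeg.
Qed.

Lemma rowdeg0 a b i : rowdeg (0 : 'M[{poly F}]_(a, b)) i = 0%N.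
Proof. by apply/eqP; rewrite -leqn0; apply/rowdeg_leP=> j; rewrite mxE size_poly0. Qed.

Lemma rowdegN a b (P : 'M[{poly F}]_(a, b)) i : rowdeg (- P) i = rowdeg P i.
Proof. by rewrite /rowdeg; under eq_bigr do rewrite mxE size_polyN. Qed.

Lemma rowdegD_le a b (P Q : 'M[{poly F}]_(a, b)) i k :
  (rowdeg P i <= k)%N -> (rowdeg Q i <= k)%N -> (rowdeg (P + Q) i <= k)%N.
Proof.
move=> /rowdeg_leP Pk /rowdeg_leP Qk; apply/rowdeg_leP=> j; rewrite mxE.
by apply: leq_trans (size_polyD _ _) _; rewrite geq_max Pk Qk.
Qed.

Lemma rowdeg_row_mx a b c (P : 'M[{poly F}]_(a, b)) (Q : 'M_(a, c)) i :
  rowdeg (row_mx P Q) i = maxn (rowdeg P i) (rowdeg Q i).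
Proof.
rewrite /rowdeg big_split_ord /=.
under eq_bigr do rewrite row_mxEl; under [X in maxn _ X]eq_bigr do rewrite row_mxEr.
lia.
Qed.

Lemma mxdeg_tr a b (P : 'M[{poly F}]_(a, b)) : mxdeg P^T = mxdeg P.
Proof. by rewrite /mxdeg exchange_big; under eq_bigr do under eq_bigr do rewrite mxE. Qed.

Lemma size_mulmx_le a b c (P : 'M[{poly F}]_(a, b)) (Q : 'M[{poly F}]_(b, c)) s t :
  (forall i k, size (P i k) <= s.+1)%N -> (forall k j, size (Q k j) <= t.+1)%N ->
  forall i j, (size ((P *m Q) i j) <= (s + t).+1)%N.
Proof.
move=> Ps Qt i j; rewrite mxE; apply: leq_trans (size_sum _ _ _) _.
apply/bigmax_leqP=> k _; apply: leq_trans (size_polyMleq _ _) _.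
by rewrite -subn1 leq_subLR; apply: leq_trans (leq_add (Ps i k) (Qt k j)) _; lia.
Qed.

Lemma rowdeg_mulmx_le a b (u : 'rV[{poly F}]_a) (P : 'M[{poly F}]_(a, b)) t :
  (forall i j, size (P i j) <= t.+1)%N -> (rowdeg (u *m P) ord0 <= rowdeg u ord0 + t)%N.
Proof.
by move=> Pt; apply/rowdeg_leP; apply: size_mulmx_le => // i k; rewrite ord1 size_le_rowdeg.
Qed.

Lemma rowdeg_witness a b (P : 'M[{poly F}]_(a, b)) i :
  row i P != 0 -> exists j, size (P i j) = (rowdeg P i).+1.
Proof.
case/rV0Pn=> j; rewrite mxE => Pij.
have b_gt0 : (0 < #|'I_b|)%N by apply/card_gt0P; exists j.
have [j0 max_j0] := eq_bigmax (fun j => size (P i j)) b_gt0.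
exists j0; rewrite /rowdeg max_j0 prednK // -max_j0.
by apply: leq_trans (leq_bigmax (F := fun j => size (P i j)) j); rewrite size_poly_gt0.
Qed.

Lemma rowdeg_lt a b (P : 'M[{poly F}]_(a, b)) i e :
  (forall j, size (P i j) <= e)%N -> row i P != 0 -> (rowdeg P i < e)%N.
Proof. by move=> Pe /rowdeg_witness[j <-]; apply: Pe. Qed.

Definition coefmx k a b (P : 'M[{poly F}]_(a, b)) : 'M[F]_(a, b) :=
  map_mx (fun q : {poly F} => q`_k) P.

Lemma coefM_size_le (q r : {poly F}) e d :
  (size q <= e.+1)%N -> (size r <= d.+1)%N -> (q * r)`_(e + d) = q`_e * r`_d.
Proof.
move=> qe rd; rewrite coefM (bigD1 (Ordinal (leq_addr d e.+1 : (e < (e + d).+1)%N))) //=.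
rewrite addKn big1 ?addr0 // => k; rewrite -val_eqE /= => k_neq_e.
have [k_lt_e|e_le_k] := ltnP k e.
  by rewrite (nth_default 0 (s := r)) ?mulr0 //; apply: leq_trans rd _; lia.
by rewrite (nth_default 0 (s := q)) ?mul0r //; apply: leq_trans qe _; lia.
Qed.

Lemma coefmx_mulmx a b c (P : 'M[{poly F}]_(a, b)) (Q : 'M[{poly F}]_(b, c)) e d :
  (forall i k, size (P i k) <= e.+1)%N -> (forall k j, size (Q k j) <= d.+1)%N ->
  coefmx (e + d) (P *m Q) = coefmx e P *m coefmx d Q.
Proof.
move=> Pe Qd; apply/matrixP=> i j; rewrite !mxE coef_sum.
by apply: eq_bigr=> k _; rewrite !mxE coefM_size_le.
Qed.

Lemma predictable_degree a b (P : 'M[{poly F}]_(a, b)) d (u : 'rV[{poly F}]_a) :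
  (forall i j, size (P i j) <= d.+1)%N -> row_free (coefmx d P) -> u != 0 ->
  rowdeg (u *m P) ord0 = (rowdeg u ord0 + d)%N.
Proof.
move=> Pd frP u_neq0; set e := rowdeg u ord0.
apply/eqP; rewrite eqn_leq rowdeg_mulmx_le //=.
have [j uj] : exists j, size (u ord0 j) = e.+1 by apply: rowdeg_witness; rewrite row_id.
have ue : forall i k, (size (u i k) <= e.+1)%N by move=> i k; rewrite ord1 size_le_rowdeg.
have : coefmx (e + d) (u *m P) != 0.
  rewrite coefmx_mulmx // mulmx_free_eq0 //; apply/rV0Pn; exists j.
  have -> : e = (size (u ord0 j)).-1 by rewrite uj.
  by rewrite mxE -lead_coefE lead_coef_eq0 -size_poly_eq0 uj.
case/rV0Pn=> k; rewrite mxE => uPk; rewrite -ltnS; apply: leq_trans (size_le_rowdeg _ _ k).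
by rewrite ltnNge; apply: contra uPk => uPk_le; rewrite nth_default.
Qed.

Lemma size_polymx a b (A : 'M[F]_(a, b)) i j : (size (polymx A i j) <= 1)%N.
Proof. by rewrite mxE size_polyC_leq1. Qed.

Lemma unitmx_ratmx_polymx a (A : 'M[F]_a) : A \in unitmx -> ratmx (polymx A) \in unitmx.
Proof.
by rewrite !unitmxE /ratmx !det_map_mx !unitfE tofrac_eq0 polyC_eq0.
Qed.

Lemma size_mul_kermx_coefmx a b (P : 'M[{poly F}]_(a, b)) d (c : 'rV[F]_a) :
  (forall i j, size (P i j) <= d.+1)%N -> c *m coefmx d P = 0 ->
  forall j, (size ((polymx c *m P) ord0 j) <= d)%N.
Proof.
move=> Pd cP0 j; apply/leq_sizeP=> k; rewrite leq_eqVlt => /predU1P[<-|d_lt_k].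
  have c0 : coefmx 0 (polymx c) = c by apply/matrixP=> i l; rewrite !mxE coefC.
  have := coefmx_mulmx (e := 0) (fun i l => size_polymx c i l) Pd.
  by rewrite c0 cP0 add0n => /matrixP/(_ ord0 j); rewrite !mxE.
apply/leq_sizeP: d_lt_k; rewrite -[d.+1]add0n.
by apply: (size_mulmx_le (s := 0)) => // i l; apply: size_polymx.
Qed.

(* A nonzero c with c *m coefmx d P = 0 gives a unimodular row operation replacing
   row i0 of P by c P, of degree < d, which contradicts minimality. *)
Lemma minimal_basis_of_row_free_coefmx k a b (V : 'M[ratF F]_(k, b)) (P : 'M_(a, b)) d :
  minimal_basis_of V P -> row_degrees_eq P d -> row_free (coefmx d P).
Proof.
move=> [/andP[frP eqPV] minP] Pd; apply: contraT; rewrite -kermx_eq0.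
case/rowV0Pn=> c /sub_kermxP cP0 /rV0Pn[i0 ci0].
have Psize i j : (size (P i j) <= d.+1)%N by rewrite -(Pd i) size_le_rowdeg.
set w := polymx c *m P.
have rc_neq0 : ratmx (polymx c) != 0.
  by apply/rV0Pn; exists i0; rewrite !mxE tofrac_eq0 polyC_eq0.
have w_neq0 : w != 0.
  apply: contraNneq rc_neq0 => w0.
  by rewrite -(mulmx_free_eq0 _ frP) -ratmxM -/w w0 ratmx0.
have w_lt : (rowdeg w ord0 < d)%N.
  by apply: rowdeg_lt; [apply: size_mul_kermx_coefmx | rewrite row_id].
set E := \matrix_(i, j) (if i == i0 then c ord0 j else (i == j)%:R).
set Q := polymx E *m P.
have rowQ i : row i Q = if i == i0 then w else row i P.
  rewrite row_mul; case: eqVneq => [->|i_neq].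
    by congr (_ *m P); apply/rowP=> j; rewrite !mxE eqxx.
  rewrite [RHS]rowE; congr (_ *m P); apply/rowP=> j; rewrite !mxE (negPf i_neq).
  by rewrite eq_sym rmorph_nat.
have eqQP : (ratmx Q == ratmx P)%MS.
  rewrite ratmxM; apply/eqmxMunitP; exists (ratmx (polymx E)) => //.
  by rewrite unitmx_ratmx_polymx // row_replace_unitmx.
have basQ : poly_basis_of V Q.
  apply/andP; split; first by rewrite /row_free (eqmx_rank eqQP).
  by apply/eqmxP; apply: eqmx_trans (eqmxP eqQP) (eqmxP eqPV).
have degQ i : rowdeg Q i = if i == i0 then rowdeg w ord0 else rowdeg P i.
  by rewrite -rowdeg_row rowQ; case: eqVneq; rewrite ?rowdeg_row.
suff degQP : (totdeg Q < totdeg P)%N by move: (minP _ _ basQ); rewrite leqNgt degQP.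
rewrite /totdeg (bigD1 i0) //= [X in (_ < X)%N](bigD1 i0) //= degQ eqxx Pd.
rewrite (eq_bigr (fun i => rowdeg P i)) => [|i /negPf i_neq]; last by rewrite degQ i_neq.
by rewrite ltn_add2r.
Qed.

Lemma size_det_le k (X : 'M[{poly F}]_k) :
  (forall i j, size (X i j) <= 2)%N -> (size (\det X) <= k.+1)%N.
Proof.
move=> X2; apply: leq_trans (size_sum _ _ _) _; apply/bigmax_leqP=> s _.
rewrite size_Msign; apply: leq_trans (size_poly_prod_leq _ _) _.
rewrite cardT size_enum_ord; set S := (\sum_i _)%N.
suff : (S <= k + k)%N by lia.
apply: (@leq_trans (\sum_(i < k) 2)%N); first by apply: leq_sum=> i _; apply: X2.
by rewrite sum_nat_const card_ord muln2 addnn.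
Qed.

Lemma size_char_poly_mx n (A : 'M[F]_n) i j : (size (char_poly_mx A i j) <= 2)%N.
Proof.
rewrite !mxE; case: eqP => _; first by rewrite mulr1n size_XsubC.
by rewrite mulr0n sub0r size_polyN size_polyC; case: (_ != 0).
Qed.

Lemma size_adj_char_poly_mx n (A : 'M[F]_n) i j : (size (\adj (char_poly_mx A) i j) <= n)%N.
Proof.
case: n A i j => [|n] A i j; first by case: i.
rewrite mxE size_Msign; apply: size_det_le=> k l.
by have := size_char_poly_mx A (lift j k) (lift i l); rewrite !mxE.
Qed.

(* chi v = x adj(lambda I - A) C with deg chi = n > deg adj(lambda I - A). *)
Lemma rowdeg_resolvent_lt n k (A : 'M[F]_n) (x : 'rV[{poly F}]_n) (C : 'M[F]_(n, k))
    (v : 'rV[{poly F}]_k) :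
  ratmx v = ratmx x *m invmx (ratmx (char_poly_mx A)) *m ratmx (polymx C) -> v != 0 ->
  (rowdeg v ord0 < rowdeg x ord0)%N.
Proof.
move=> ev v_neq0; case: n A x C ev => [|n] A x C ev.
  by move: v_neq0; rewrite -(inj_eq (@ratmx_inj _ _ _)) ev thinmx0 !mul0mx ratmx0 eqxx.
set chi := char_poly A.
have chi_neq0 : chi != 0 by rewrite monic_neq0 // char_poly_monic.
have det_chi : \det (ratmx (char_poly_mx A)) = tofrac chi by rewrite /ratmx det_map_mx.
have unit_chi : ratmx (char_poly_mx A) \in unitmx by rewrite unitmxE det_chi unitfE tofrac_eq0.
have chi_v : chi *: v = x *m \adj (char_poly_mx A) *m polymx C.
  apply: ratmx_inj; rewrite ratmx_scale ev /invmx unit_chi det_chi !ratmxM /ratmx map_mx_adj.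
  by rewrite -scalemxAr -scalemxAl scalerA mulfV ?tofrac_eq0 // scale1r.
have x_adj_C j :
    (size ((x *m \adj (char_poly_mx A) *m polymx C) ord0 j) <= (rowdeg x ord0 + n + 0).+1)%N.
  apply: size_mulmx_le; last by move=> *; apply: size_polymx.
  apply: size_mulmx_le=> [i l|i l]; first by rewrite ord1 size_le_rowdeg.
  exact: size_adj_char_poly_mx.
have [j vj] : exists j, size (v ord0 j) = (rowdeg v ord0).+1.
  by apply: rowdeg_witness; rewrite row_id.
have := x_adj_C j; rewrite -chi_v mxE size_mul ?chi_neq0 -?size_poly_eq0 ?vj //.
by rewrite size_char_poly; lia.
Qed.

End RowDegree.

Section MinimalIndexShift.
Variables (F : fieldType) (k k' b b' d : nat).
Variables (V : 'M[ratF F]_(k, b)) (V' : 'M[ratF F]_(k', b')).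
Variables (X : 'M[{poly F}]_(b, b')) (Y : 'M[{poly F}]_(b', b)).
Hypotheses (XY : X *m Y = 1%:M) (VX : (V *m ratmx X <= V')%MS)
  (V'Y : (V' *m ratmx Y <= V)%MS) (V'YX : V' *m ratmx Y *m ratmx X = V').
Hypotheses (rowdeg_mulX_ge :
    forall u : 'rV_b, u != 0 -> (rowdeg u ord0 + d <= rowdeg (u *m X) ord0)%N)
  (rowdeg_mulX_le : forall u : 'rV_b,
     (ratmx u <= V)%MS -> (rowdeg (u *m X) ord0 <= rowdeg u ord0 + d)%N).

Let rXY : ratmx X *m ratmx Y = 1%:M. Proof. by rewrite -ratmxM XY ratmx1. Qed.

Lemma rowdeg_mulmx_shift l (P : 'M[{poly F}]_(l, b)) i :
  row_free (ratmx P) -> (ratmx P <= V)%MS -> rowdeg (P *m X) i = (rowdeg P i + d)%N.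
Proof.
move=> frP PV; rewrite -rowdeg_row row_mul -(rowdeg_row P); apply/eqP; rewrite eqn_leq.
rewrite rowdeg_mulX_le ?rowdeg_mulX_ge ?row_free_ratmx_row_neq0 //.
by rewrite ratmx_row (submx_trans (row_sub i _) PV).
Qed.

Lemma totdeg_mulmx_ge a (Z : 'M[{poly F}]_(a, b)) :
  row_free (ratmx Z) -> (totdeg Z + a * d <= totdeg (Z *m X))%N.
Proof.
move=> frZ; have -> : (a * d = \sum_(i < a) d)%N by rewrite sum_nat_const card_ord.
rewrite /totdeg -big_split /=; apply: leq_sum=> i _.
rewrite -(rowdeg_row Z) -(rowdeg_row (Z *m X)) row_mul.
by apply: rowdeg_mulX_ge; apply: row_free_ratmx_row_neq0.
Qed.

Lemma poly_basis_of_mulmx l (P : 'M[{poly F}]_(l, b)) :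
  poly_basis_of V P -> poly_basis_of V' (P *m X).
Proof.
case/andP=> frP /andP[PV VP]; rewrite /poly_basis_of ratmxM.
have PXV' : (ratmx P *m ratmx X <= V')%MS by apply: submx_trans (submxMr _ PV) VX.
have V'PX : (V' <= ratmx P *m ratmx X)%MS.
  by rewrite -V'YX; apply: submxMr; apply: submx_trans V'Y VP.
rewrite PXV' V'PX /row_free eqn_leq rank_leq_row -{1}(eqP frP) -{1}[ratmx P]mulmx1 -rXY mulmxA.
by rewrite mxrankM_maxl.
Qed.

Lemma poly_basis_of_mulmx_inv a (P' : 'M[{poly F}]_(a, b')) :
  poly_basis_of V' P' -> poly_basis_of V (P' *m Y) /\ P' = P' *m Y *m X.
Proof.
case/andP=> frP' /andP[P'V' V'P'].
have P'YX : ratmx P' *m ratmx Y *m ratmx X = ratmx P'.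
  by case/submxP: P'V' => D ->; rewrite -!mulmxA (mulmxA V') V'YX.
split; last by apply: ratmx_inj; rewrite !ratmxM P'YX.
rewrite /poly_basis_of ratmxM (submx_trans (submxMr _ P'V') V'Y) /=.
have -> : (V <= ratmx P' *m ratmx Y)%MS.
  by rewrite -[V]mulmx1 -rXY mulmxA; apply: submxMr; apply: submx_trans VX V'P'.
rewrite /row_free eqn_leq rank_leq_row -{1}(eqP frP') -{1}P'YX.
by rewrite mxrankM_maxl.
Qed.

Lemma minimal_basis_of_mulmx l (P : 'M[{poly F}]_(l, b)) :
  minimal_basis_of V P -> minimal_basis_of V' (P *m X).
Proof.
case=> basP minP; have basPX := poly_basis_of_mulmx basP.
split=> // a P' basP'; have [basZ eP'] := poly_basis_of_mulmx_inv basP'.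
have a_eq_l : a = l.
  have [/eqP rkP' eqP'V'] := andP basP'; have [/eqP rkPX eqPXV'] := andP basPX.
  by rewrite -rkP' -rkPX (eqmx_rank eqP'V') (eqmx_rank eqPXV').
subst a; case/andP: basP => frP /andP[PV _].
have -> : totdeg (P *m X) = (totdeg P + l * d)%N.
  rewrite /totdeg; under eq_bigr=> i _ do rewrite rowdeg_mulmx_shift //.
  by rewrite big_split /= sum_nat_const card_ord.
rewrite [in X in (_ <= X)%N]eP'; apply: leq_trans (totdeg_mulmx_ge _); last by case/andP: basZ.
by rewrite leq_add2r minP.
Qed.

Lemma min_indices_of_mulmx s : min_indices_of V s -> min_indices_of V' [seq (e + d)%N | e <- s].
Proof.
case=> sorted_s [l [P [minP perm_s]]]; split.
  by rewrite sorted_map; apply: sub_sorted sorted_s => e e'; rewrite /= leq_add2r.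
exists l, (P *m X); split; first exact: minimal_basis_of_mulmx.
have [[/andP[frP /andP[PV _]] _]] := minP.
have -> : [seq rowdeg (P *m X) i | i <- enum 'I_l] =
          [seq (e + d)%N | e <- [seq rowdeg P i | i <- enum 'I_l]].
  by rewrite -map_comp; apply: eq_map=> i; rewrite /= rowdeg_mulmx_shift.
exact: perm_map.
Qed.

End MinimalIndexShift.

Section RightMinimalIndices.
Variables (F : fieldType) (n p m ph mh : nat).
Variables (A : 'M[F]_n) (B : 'M[F]_(n, m)) (C : 'M[F]_(p, n)) (D : 'M[{poly F}]_(p, m)).
Variables (K1 N1h : 'M[{poly F}]_(mh, m + mh)) (N1 : 'M[{poly F}]_(m, m + mh)).
Variables (K2 N2h : 'M[{poly F}]_(ph, p + ph)) (N2 : 'M[{poly F}]_(p, p + ph)).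
Variables (K1h : 'M[F]_(m, m + mh)) (K2h : 'M[F]_(p, p + ph)).
Variable M : 'M[{poly F}]_(p + ph, m + mh).
Hypotheses (U1 : col_mx K1 (polymx K1h) *m row_mx N1h^T N1^T = 1%:M)
  (U1' : row_mx N1h^T N1^T *m col_mx K1 (polymx K1h) = 1%:M)
  (U2 : col_mx K2 (polymx K2h) *m row_mx N2h^T N2^T = 1%:M)
  (U2' : row_mx N2h^T N2^T *m col_mx K2 (polymx K2h) = 1%:M).
Hypotheses (DE : D = N2 *m M *m N1^T) (M_deg : (mxdeg M <= 1)%N).
Hypotheses (K2_min : minimal_basis K2) (K2_deg : row_degrees_eq K2 1).
Hypotheses (N1_min : minimal_basis N1) (N1_deg : equal_row_degrees N1).

Local Notation G := (ratmx D + ss_tf A B C).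
Local Notation Gh := (Ghat A B C M K1 K2 K1h K2h).
Local Notation d := (mxdeg N1).

Lemma rowdeg_mul_D_le (u : 'rV[{poly F}]_m) :
  ratmx u *m G^T = 0 -> (rowdeg (u *m D^T *m polymx K2h) ord0 <= rowdeg u ord0)%N.
Proof.
move=> uG0; set w := u *m D^T *m polymx K2h.
have [->|w_neq0] := eqVneq w 0; first by rewrite rowdeg0.
have ew : ratmx (- w) = ratmx (u *m polymx B^T) *m invmx (ratmx (char_poly_mx A^T))
                        *m ratmx (polymx (C^T *m K2h)).
  have uD : ratmx u *m (ratmx D)^T = - (ratmx u *m (ss_tf A B C)^T).
    by apply/eqP; rewrite -addr_eq0 -mulmxDr -linearD /= uG0.
  by rewrite /w ratmxN !ratmxM ratmx_tr uD mulNmx opprK ss_tf_tr /ss_tf polymxM ratmxM !mulmxA.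
have := rowdeg_resolvent_lt ew; rewrite oppr_eq0 rowdegN => /(_ w_neq0) /ltnW/leq_trans; apply.
by rewrite -[leqRHS]addn0; apply: rowdeg_mulmx_le=> i j; apply: size_polymx.
Qed.

Lemma rowdeg_tail_le (u : 'rV[{poly F}]_m) : ratmx u *m G^T = 0 ->
  (rowdeg (u *m N1 *m M^T *m N2h^T) ord0 <= rowdeg u ord0 + d)%N.
Proof.
move=> uG0; set x := u *m N1; set y := x *m M^T *m N2h^T.
have [->|y_neq0] := eqVneq y 0; first by rewrite rowdeg0.
have x_deg : (rowdeg x ord0 <= rowdeg u ord0 + d)%N.
  by apply: rowdeg_mulmx_le=> i j; apply: size_le_mxdeg.
have xM_deg : (rowdeg (x *m M^T) ord0 <= rowdeg u ord0 + d + 1)%N.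
  have M_size i j : (size (M^T i j) <= 2)%N.
    by rewrite mxE (leq_trans (size_le_mxdeg M j i)) ?ltnS.
  by apply: leq_trans (rowdeg_mulmx_le x M_size) _; rewrite leq_add2r.
have yK2 : y *m K2 = x *m M^T - u *m D^T *m polymx K2h.
  have N2K2 : N2h^T *m K2 = 1%:M - N2^T *m polymx K2h by rewrite -U2' mul_row_col addrK.
  by rewrite /y -[_ *m K2]mulmxA N2K2 mulmxBr mulmx1 DE !trmx_mul trmxK /x !mulmxA.
have K2_size i j : (size (K2 i j) <= 2)%N by rewrite -(K2_deg i) size_le_rowdeg.
have K2_lead := minimal_basis_of_row_free_coefmx K2_min K2_deg.
rewrite -(leq_add2r 1) -(predictable_degree K2_size K2_lead y_neq0) yK2.
apply: rowdegD_le=> //; rewrite rowdegN; apply: leq_trans (rowdeg_mul_D_le uG0) _.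
by rewrite -addnA leq_addr.
Qed.

Let rU1 : col_mx (ratmx K1) (ratmx (polymx K1h)) *m row_mx (ratmx N1h)^T (ratmx N1)^T = 1%:M.
Proof. by rewrite -!ratmx_tr -ratmx_col -ratmx_row_mx -ratmxM U1 ratmx1. Qed.
Let rU1' : row_mx (ratmx N1h)^T (ratmx N1)^T *m col_mx (ratmx K1) (ratmx (polymx K1h)) = 1%:M.
Proof. by rewrite -!ratmx_tr -ratmx_col -ratmx_row_mx -ratmxM U1' ratmx1. Qed.
Let rU2 : col_mx (ratmx K2) (ratmx (polymx K2h)) *m row_mx (ratmx N2h)^T (ratmx N2)^T = 1%:M.
Proof. by rewrite -!ratmx_tr -ratmx_col -ratmx_row_mx -ratmxM U2 ratmx1. Qed.
Let rU2' : row_mx (ratmx N2h)^T (ratmx N2)^T *m col_mx (ratmx K2) (ratmx (polymx K2h)) = 1%:M.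
Proof. by rewrite -!ratmx_tr -ratmx_col -ratmx_row_mx -ratmxM U2' ratmx1. Qed.

Lemma Ghat_block_tf : Gh = block_tf (ratmx K1) (ratmx (polymx K1h)) (ratmx K2)
                                    (ratmx (polymx K2h)) (ratmx M) (ss_tf A B C).
Proof. by rewrite /Ghat ss_tf_mul polymx_tr !ratmx_tr. Qed.

Local Notation Phi := (null_emb N1 N2h M).
Local Notation Psi := (null_ret ph (polymx K1h)).

Lemma ratmx_null_emb : ratmx Phi = null_emb (ratmx N1) (ratmx N2h) (ratmx M).
Proof. by rewrite /null_emb ratmx_col ratmxN !ratmxM ratmx_tr. Qed.

Lemma ratmx_null_ret : ratmx Psi = null_ret ph (ratmx (polymx K1h)).
Proof. by rewrite /null_ret ratmx_row_mx ratmx0. Qed.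

Lemma rowdeg_mul_null_emb (u : 'rV[{poly F}]_m) :
  rowdeg (u *m Phi^T) ord0 = maxn (rowdeg (u *m N1) ord0) (rowdeg (u *m N1 *m M^T *m N2h^T) ord0).
Proof. by rewrite null_emb_tr mul_mx_row rowdeg_row_mx mulmxN rowdegN !mulmxA. Qed.

Theorem right_min_indices_Ghat s :
  right_min_indices G s -> right_min_indices Gh [seq (e + d)%N | e <- s].
Proof.
have N1_size i j : (size (N1 i j) <= d.+1)%N by apply: size_le_mxdeg.
have N1_lead : row_free (coefmx d N1).
  by apply: minimal_basis_of_row_free_coefmx N1_min _ => i; apply: rowdeg_mxdeg.
apply: (min_indices_of_mulmx (X := Phi^T) (Y := Psi^T)).
- by rewrite -trmx_mul (null_ret_emb _ _ U1) trmx1.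
- rewrite ratmx_tr ratmx_null_emb.
  apply: (kermx_tr_mul_sub (E := col_mx (ratmx (polymx K2h))^T 0)).
  by rewrite Ghat_block_tf (block_tf_null_emb _ _ rU1 rU2') DE !ratmxM ratmx_tr mul_col_mx mul0mx.
- rewrite ratmx_tr ratmx_null_ret; apply: kermx_tr_mul_sub.
  by rewrite Ghat_block_tf DE !ratmxM ratmx_tr (G_null_ret _ _ rU1' rU2).
- rewrite !ratmx_tr ratmx_null_emb ratmx_null_ret; apply: kermx_tr_mul_id.
  by rewrite Ghat_block_tf; apply: null_emb_ret rU1' rU2.
- move=> u u_neq0; rewrite rowdeg_mul_null_emb -(predictable_degree N1_size N1_lead u_neq0).
  exact: leq_maxl.
- move=> u /sub_kermxP uG0; rewrite rowdeg_mul_null_emb geq_max rowdeg_tail_le // andbT.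
  exact: rowdeg_mulmx_le.
Qed.

End RightMinimalIndices.

Lemma Ghat_tr (F : fieldType) n p m ph mh (A : 'M[F]_n) (B : 'M[F]_(n, m)) (C : 'M[F]_(p, n))
    (M : 'M[{poly F}]_(p + ph, m + mh)) (K1 : 'M[{poly F}]_(mh, m + mh))
    (K2 : 'M[{poly F}]_(ph, p + ph)) (K1h : 'M[F]_(m, m + mh)) (K2h : 'M[F]_(p, p + ph)) :
  (Ghat A B C M K1 K2 K1h K2h)^T = Ghat A^T C^T B^T M^T K2 K1 K2h K1h.
Proof.
by rewrite /Ghat tr_block_mx linearD /= ss_tf_tr !trmx_mul !trmxK trmx0 -!ratmx_tr trmxK.
Qed.

Lemma left_min_indices_tr (F : fieldType) p m (G : 'M[ratF F]_(p, m)) s :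
  left_min_indices G s = right_min_indices G^T s.
Proof. by rewrite /right_min_indices /right_null trmxK. Qed.

Theorem corollary6p2 (F : fieldType) (n p m ph mh : nat)
  (G : 'M[ratF F]_(p, m))
  (D : 'M[{poly F}]_(p, m)) (A : 'M[F]_n) (B : 'M[F]_(n, m)) (C : 'M[F]_(p, n))
  (K1 : 'M[{poly F}]_(mh, m + mh)) (K2 : 'M[{poly F}]_(ph, p + ph))
  (N1 : 'M[{poly F}]_(m, m + mh)) (N2 : 'M[{poly F}]_(p, p + ph))
  (M : 'M[{poly F}]_(p + ph, m + mh))
  (K1h : 'M[F]_(m, m + mh)) (K2h : 'M[F]_(p, p + ph))
  (N1h : 'M[{poly F}]_(mh, m + mh)) (N2h : 'M[{poly F}]_(ph, p + ph))
  (T S : 'M[F]_n) :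
  G = ratmx D + ss_tf A B C ->
  minimal_order_realization A B C ->
  (1 < mxdeg D)%N ->
  minimal_basis K1 -> row_degrees_eq K1 1 ->
  minimal_basis K2 -> row_degrees_eq K2 1 ->
  dual_minimal_bases K1 N1 -> equal_row_degrees N1 ->
  dual_minimal_bases K2 N2 -> equal_row_degrees N2 ->
  (mxdeg M <= 1)%N ->
  D = N2 *m M *m N1^T ->
  mxdeg D = (mxdeg N1 + mxdeg N2 + 1)%N ->
  col_mx K1 (polymx K1h) *m row_mx N1h^T N1^T = 1%:M ->
  row_mx N1h^T N1^T *m col_mx K1 (polymx K1h) = 1%:M ->
  col_mx K2 (polymx K2h) *m row_mx N2h^T N2^T = 1%:M ->
  row_mx N2h^T N2^T *m col_mx K2 (polymx K2h) = 1%:M ->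
  T \in unitmx -> S \in unitmx ->
  (forall s, right_min_indices G s ->
     right_min_indices (Ghat A B C M K1 K2 K1h K2h) [seq (e + mxdeg N1)%N | e <- s]) /\
  (forall s, left_min_indices G s ->
     left_min_indices (Ghat A B C M K1 K2 K1h K2h) [seq (e + mxdeg N2)%N | e <- s]).
Proof.
move=> -> _ _ K1_min K1_deg K2_min K2_deg [_ N1_min _ _] N1_deg [_ N2_min _ _] N2_deg
  M_deg DE _ U1 U1' U2 U2' _ _.
split=> s; first exact: (right_min_indices_Ghat U1 U1' U2 U2' DE M_deg K2_min K2_deg N1_min N1_deg).
have DE' : D^T = N1 *m M^T *m N2^T by rewrite DE !trmx_mul trmxK mulmxA.
have M_deg' : (mxdeg M^T <= 1)%N by rewrite mxdeg_tr.
rewrite !left_min_indices_tr Ghat_tr linearD /= -ratmx_tr ss_tf_tr.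
exact: (right_min_indices_Ghat U2 U2' U1 U1' DE' M_deg' K1_min K1_deg N2_min N2_deg).
Qed.
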